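(* Let $r\in\mathbb Q_{\ge0}$, $N\ge 1$, $L\in\mathbb Z$ with $r=L/N$, $g=\gcd(L,N)$, $\ell=L/g$, $n=N/g$. Let $F$ be a $p$-adic field with residue field $\mathbb F_q$ of characteristic $p>n$. Let $P=\lambda^N+\alpha_1\lambda^{N-1}+\dots+\alpha_{ng}\in F[\lambda]$ have slope $r$ (all roots $\lambda_i\in\bar F$ satisfy $|\lambda_i|=q^{-r}$), with $N$ distinct roots $\lambda_1,\dots,\lambda_N$ satisfying $|\lambda_i-\lambda_j|=q^{-r}$ for all $i\ne j$. Let $R=\lambda^g+a_1\lambda^{g-1}+\dots+a_g\in\mathbb F_q[\lambda]$, $a_j=\operatorname{res}_{\ell j}(\alpha_{nj})$, be its $r$-reduction. Then the map $\lambda_j\mapsto t_r(\lambda_j)$ from the roots of $P$ to the roots of $R$ is an $n$-to-$1$ map onto the set of roots of $R$.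
   Context: $\varpi$ a uniformizer of $F$; $\operatorname{ord}$ the valuation on $\bar F$ with $\operatorname{ord}\varpi=1$; $|x|=q^{-\operatorname{ord}x}$. For $x\in\bar F$ with $\operatorname{ord}x\in\mathbb Z$, $\operatorname{ac}(x)=\operatorname{res}(x/\varpi^{\operatorname{ord}x})\in\bar{\mathbb F}_q$ ($\operatorname{ac}(0)=0$), where $\operatorname{res}$ is reduction of integers of $\bar F$ to $\bar{\mathbb F}_q$; $\operatorname{res}_i(x)=\operatorname{ac}(x)$ if $\operatorname{ord}x=i$, else $0$. For $\lambda\in\bar F$ with $\operatorname{ord}\lambda=r$, $t_r(\lambda)=\operatorname{ac}(\lambda^n/\varpi^\ell)\in\bar{\mathbb F}_q^\times$. *)

(* Abstract axiomatisation of the p-adic setting: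
   Fb plays the role of \bar F (algebraic closure of the p-adic field F),
   F : {pred Fb} is the p-adic field itself, kb plays \bar F_q. *)
From HB Require Import structures.
From mathcomp Require Import all_boot all_order all_algebra.
Set Implicit Arguments. Unset Strict Implicit. Unset Printing Implicit Defensive.
Import Order.TTheory GRing.Theory Num.Theory.
Local Open Scope ring_scope.

Section Setting.
Variables (Fb kb : fieldType) (F : {pred Fb}) (ord : Fb -> rat)
  (varpi : Fb) (res : Fb -> kb).

(* integers of \bar F: ord x >= 0 (with ord 0 = +oo) *)
Definition integral (x : Fb) : Prop := x = 0 \/ 0 <= ord x.

(* Axioms describing: F a field of characteristic 0 (p-adic field), Fb an
   algebraic extension of F (its algebraic closure; Fb is required to be a
   closedFieldType in the theorem), ord a valuation on Fb (defined on nonzero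
   elements, ord 0 = +oo implicitly), integer valued on F^x with ord varpi = 1
   for a uniformizer varpi in F, res the reduction map from the integers of Fb
   onto kb (the residue field of Fb, algebraically closed), kb of
   characteristic p, the residue field of F being finite with q elements and kb
   algebraic over it. *)
Record padic_setting (p q : nat) : Prop := {
  F_subfield : GRing.divring_closed F;
  F_char0 : forall m : nat, (m.+1%:R : Fb) != 0;
  Fb_algebraic : forall x : Fb, exists Q : {poly Fb},
      [/\ Q != 0, Q \is a polyOver F & root Q x];
  ordM : forall x y, x != 0 -> y != 0 -> ord (x * y) = ord x + ord y;
  ordD : forall x y, x != 0 -> y != 0 -> x + y != 0 ->
      Num.min (ord x) (ord y) <= ord (x + y);
  ord_F_int : forall x, x \in F -> x != 0 -> exists z : int, ord x = z%:~R;
  varpi_F : varpi \in F;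
  varpi_neq0 : varpi != 0;
  ord_varpi : ord varpi = 1;
  resD : forall x y, integral x -> integral y -> res (x + y) = res x + res y;
  resM : forall x y, integral x -> integral y -> res (x * y) = res x * res y;
  res1 : res 1 = 1;
  res_eq0 : forall x, integral x -> (res x = 0 <-> (x = 0 \/ 0 < ord x));
  res_surj : forall y : kb, exists x, integral x /\ res x = y;
  kb_char : p \in [pchar kb];
  residue_F_finite : exists s : seq kb, [/\ uniq s, size s = q &
      forall y, (exists x, [/\ x \in F, integral x & res x = y]) <-> y \in s];
  kb_algebraic : forall y : kb, exists Q : {poly kb}, [/\ Q != 0, root Q y &
      forall i, exists x, [/\ x \in F, integral x & res x = Q`_i]]
}.

(* angular component: ac(x) = res(x / varpi^(ord x)) when ord x is an integer,
   ac(0) = 0 (junk value 0 when ord x is not an integer) *)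
Definition ac (x : Fb) : kb :=
  if x == 0 then 0
  else if (denq (ord x) == 1) then res (x / varpi ^ (numq (ord x))) else 0.

Definition res_i (i : int) (x : Fb) : kb :=
  if (x != 0) && (ord x == i%:~R) then ac x else 0.

Definition t_r (n : nat) (l : int) (lam : Fb) : kb := ac (lam ^+ n / varpi ^ l).

(* r-reduction: R = X^g + a_1 X^(g-1) + ... + a_g,
   a_j = res_(l j)(alpha_(n j)), where alpha_k = P`_(N - k)
   (P = X^N + alpha_1 X^(N-1) + ... + alpha_N). *)
Definition r_reduction (N n g : nat) (l : int) (P : {poly Fb}) : {poly kb} :=
  \poly_(i < g.+1) res_i (l * (g - i)%:Z) (P`_(N - n * (g - i))).

End Setting.

Definition gcdLN (L : int) (N : nat) : nat := `|gcdz L N|%N.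

From HB Require Import structures.
From mathcomp Require Import all_boot all_order all_algebra ring.
Import Order.TTheory GRing.Theory Num.Theory.
Set Implicit Arguments. Unset Strict Implicit.
Local Open Scope ring_scope.

(* Pick mu with mu^n = varpi^l, so that ord mu = r, and put u_i = lambda_i / mu.
   The u_i are units whose residues w_i are pairwise distinct, because
   ord (lambda_i - lambda_j) = r, and t_r (lambda_i) = w_i^n.  Rescaling,
   P (mu X) / mu^N = prod (X - u_i) has integral coefficients; the coefficient
   of X^m has valuation ord (alpha_(N-m)) - (N - m) r, which vanishes only if
   n | N - m since gcd (n, l) = 1, and then its residue is the corresponding
   coefficient of R.  Hence prod (X - w_i) = R (X^n), so each w_i^n is a root
   of R, and for a root y of R the polynomial X^n - y, which divides
   prod (X - w_i), has exactly n roots among the distinct w_i. *)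

Lemma closed_field_nth_root (K : closedFieldType) n (c : K) :
  (0 < n)%N -> exists x, x ^+ n = c.
Proof.
move=> n_gt0; have /closed_rootP[x] : size ('X^n - c%:P) != 1%N.
  by rewrite size_XnsubC // eqSS -lt0n.
by rewrite rootE !hornerE subr_eq0 => /eqP; exists x.
Qed.

Lemma coef_polyOver (R : nzSemiRingType) (S : {pred R}) (p : {poly R}) i :
  0 \in S -> p \is a polyOver S -> p`_i \in S.
Proof.
move=> S0 /(all_nthP 0) Sp.
by have [/Sp //|/(nth_default 0) ->] := ltnP i (size p).
Qed.

Lemma coef_comp_poly_scaleX (R : comNzRingType) (p : {poly R}) c m :
  (p \Po (c *: 'X))`_m = c ^+ m * p`_m.
Proof.
have -> : p \Po (c *: 'X) = \poly_(i < size p) (c ^+ i * p`_i).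
  rewrite comp_polyE poly_def; apply: eq_bigr => i _.
  by rewrite exprZn scalerA mulrC.
by rewrite coef_poly; case: ltnP => // /(nth_default 0) ->; rewrite mulr0.
Qed.

Lemma prod_XsubC_scale (K : fieldType) (I : finType) (a : I -> K) mu :
  mu != 0 -> \prod_i ('X - (mu * a i)%:P) =
  mu ^+ #|I| *: (\prod_i ('X - (a i)%:P) \Po (mu^-1 *: 'X)).
Proof.
move=> mu_neq0; have factorE i :
    'X - (mu * a i)%:P = mu *: (('X - (a i)%:P) \Po (mu^-1 *: 'X)).
  rewrite comp_polyB comp_polyX comp_polyC scalerBr scalerA divff // scale1r.
  by rewrite scale_polyC.
by rewrite (eq_bigr _ (fun i _ => factorE i)) scaler_prod prodr_const rmorph_prod.
Qed.

Lemma card_expn_fibre_le (K : fieldType) (I : finType) (w : I -> K) n y :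
  injective w -> (0 < n)%N -> (#|[set i | w i ^+ n == y]| <= n)%N.
Proof.
move=> w_inj n_gt0; set S := [set i | _].
have := @max_poly_roots K ('X^n - y%:P) [seq w i | i <- enum S].
rewrite size_XnsubC // size_map -cardE ltnS; apply.
- by rewrite -size_poly_eq0 size_XnsubC.
- apply/allP => x /mapP[i]; rewrite mem_enum inE => /eqP wi_n ->.
  by rewrite /root !hornerE wi_n subrr.
- by rewrite map_inj_uniq ?enum_uniq.
Qed.

Section ProdXsubCCompXn.
Variables (K : fieldType) (I : finType) (w : I -> K) (n : nat) (R : {poly K}).
Hypothesis prod_w : \prod_i ('X - (w i)%:P) = R \Po 'X^n.

Lemma root_comp_Xn_expn i : root R (w i ^+ n).
Proof.
rewrite /root -hornerXn -horner_comp -prod_w horner_prod (bigD1 i) //=.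
by rewrite hornerXsubC subrr mul0r.
Qed.

Lemma card_expn_fibre_ge y :
  (0 < n)%N -> root R y -> (n <= #|[set i | w i ^+ n == y]|)%N.
Proof.
move=> n_gt0 /factor_theorem[R1 R1y]; set S := [set i | _].
have : ('X^n - y%:P) %| \prod_i ('X - (w i)%:P).
  by rewrite prod_w R1y comp_polyM comp_polyB comp_polyX comp_polyC dvdp_mull.
rewrite (bigID (mem S)) /= Gauss_dvdpl; last first.
  apply: (big_ind (coprimep _)) => [|a b ca cb|i]; first exact: coprimep1.
    by rewrite coprimepMr ca cb.
  by rewrite coprimep_XsubC /root !hornerE subr_eq0 inE.
move/(dvdp_leq (monic_neq0 (monic_prod_XsubC _ _ _))).
by rewrite -big_filter size_prod_XsubC size_XnsubC // ltnS cardE /enum_mem.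
Qed.

End ProdXsubCCompXn.

Lemma slope_lowest_terms (L : int) (N : nat) (r : rat) :
    (0 < N)%N -> 0 <= r -> r = L%:~R / N%:R ->
  let g := gcdLN L N in
  exists ell : nat, [/\ (L %/ g%:Z)%Z = ell, N = (N %/ g * g)%N,
                        coprime (N %/ g) ell & r = ell%:R / (N %/ g)%:R].
Proof.
move=> N_gt0 r_ge0 r_E; have : 0 <= L.
  by move: r_ge0; rewrite r_E pmulr_lge0 ?ler0z // invr_gt0 ltr0n.
case: L r_E => [L r_E _|//] g; have g_E : g = gcdn L N by [].
have g_gt0 : (0 < g)%N by rewrite g_E gcdn_gt0 N_gt0 orbT.
have [L_E N_E] : L = (L %/ g * g)%N /\ N = (N %/ g * g)%N.
  by rewrite !divnK // g_E ?dvdn_gcdl ?dvdn_gcdr.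
exists (L %/ g)%N; split=> //; first by rewrite divz_nat.
  rewrite /coprime -(eqn_pmul2r g_gt0) mul1n muln_gcdl -L_E -N_E gcdnC.
  by rewrite -g_E.
have g_neq0 : g%:R != 0 :> rat by rewrite pnatr_eq0 -lt0n.
by rewrite r_E -pmulrn {1}L_E {1}N_E !natrM invfM mulrACA divff // mulr1.
Qed.

Lemma int_eq_frac_coprime (z : int) (n ell k : nat) : (0 < n)%N -> coprime n ell ->
  z%:~R = (k * ell)%:R / n%:R :> rat -> (n %| k)%N /\ z = (ell * (k %/ n))%N.
Proof.
move=> n_gt0 cop_n_ell z_E.
have n_neq0 : n%:R != 0 :> rat by rewrite pnatr_eq0 -lt0n.
have zn_E : z * n = (k * ell)%N.
  by apply: (@intr_inj rat); rewrite intrM z_E mulfVK.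
have n_k : (n %| k)%N.
  rewrite -(Gauss_dvdl _ cop_n_ell); apply/dvdnP; exists `|z|%N.
  by have /(congr1 absz) := zn_E; rewrite abszM.
split=> //; apply: (mulIf (_ : n%:Z != 0)); first by rewrite eqz_nat -lt0n.
by rewrite zn_E -PoszM -mulnA divnK // mulnC.
Qed.

Section Valuation.
Variables (Fb kb : fieldType) (F : {pred Fb}) (ord : Fb -> rat) (varpi : Fb).
Variables (res : Fb -> kb) (p q : nat).
Hypothesis Hs : padic_setting F ord varpi res p q.
Local Notation integral := (integral ord).

Lemma ord1 : ord 1 = 0.
Proof.
have := ordM Hs (oner_neq0 Fb) (oner_neq0 Fb).
by rewrite mulr1 => /(congr1 (fun t => t - ord 1)); rewrite subrr addrK => ->.
Qed.

Lemma ordV x : x != 0 -> ord x^-1 = - ord x.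
Proof.
move=> x_neq0; have := ordM Hs x_neq0 (invr_neq0 x_neq0).
by rewrite divff // ord1 => /eqP; rewrite eq_sym addrC addr_eq0 => /eqP.
Qed.

Lemma ord_div x y : x != 0 -> y != 0 -> ord (x / y) = ord x - ord y.
Proof. by move=> x_neq0 y_neq0; rewrite (ordM Hs) ?invr_eq0 // ordV. Qed.

Lemma ordX x k : x != 0 -> ord (x ^+ k) = k%:R * ord x.
Proof.
move=> x_neq0; elim: k => [|k IH]; first by rewrite expr0 ord1 mul0r.
by rewrite exprS (ordM Hs) ?expf_neq0 // IH mulrSr mulrDl mul1r addrC.
Qed.

Lemma ordN x : x != 0 -> ord (- x) = ord x.
Proof.
move=> x_neq0; have N1_neq0 : (-1 : Fb) != 0 by rewrite oppr_eq0 oner_neq0.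
have ordN1 : ord (-1) = 0.
  have /eqP := ordM Hs N1_neq0 N1_neq0.
  by rewrite mulrNN mulr1 ord1 eq_sym -mulr2n mulrn_eq0 => /eqP.
by rewrite -mulN1r (ordM Hs) // ordN1 add0r.
Qed.

Lemma integral1 : integral 1.
Proof. by right; rewrite ord1. Qed.

Lemma integralM x y : integral x -> integral y -> integral (x * y).
Proof.
have [->|x_neq0] := eqVneq x 0; first by rewrite mul0r; left.
have [->|y_neq0] := eqVneq y 0; first by rewrite mulr0; left.
case=> [/eqP|x_ge0]; first by rewrite (negbTE x_neq0).
case=> [/eqP|y_ge0]; first by rewrite (negbTE y_neq0).
by right; rewrite (ordM Hs) // addr_ge0.
Qed.

Lemma integralX x k : integral x -> integral (x ^+ k).
Proof.
move=> x_int; elim: k => [|k IH]; first by rewrite expr0; apply: integral1.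
by rewrite exprS; apply: integralM.
Qed.

Lemma integralN x : integral x -> integral (- x).
Proof.
have [->|x_neq0] := eqVneq x 0; first by rewrite oppr0; left.
by case=> [/eqP|x_ge0]; [rewrite (negbTE x_neq0) | right; rewrite ordN].
Qed.

Lemma integralD x y : integral x -> integral y -> integral (x + y).
Proof.
have [->|x_neq0] := eqVneq x 0; first by rewrite add0r.
have [->|y_neq0] := eqVneq y 0; first by rewrite addr0.
have [->|xy_neq0] := eqVneq (x + y) 0; first by left.
case=> [/eqP|x_ge0]; first by rewrite (negbTE x_neq0).
case=> [/eqP|y_ge0]; first by rewrite (negbTE y_neq0).
by right; apply: le_trans (ordD Hs x_neq0 y_neq0 xy_neq0); rewrite le_min x_ge0.
Qed.

Lemma res0 : res 0 = 0.
Proof. by apply/(res_eq0 Hs); left. Qed.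

Lemma resN x : integral x -> res (- x) = - res x.
Proof.
move=> x_int; apply/eqP; rewrite -addr_eq0 -(resD Hs) //; last exact: integralN.
by rewrite addNr res0.
Qed.

Lemma resX x k : integral x -> res (x ^+ k) = res x ^+ k.
Proof.
move=> x_int; elim: k => [|k IH]; first by rewrite !expr0 (res1 Hs).
by rewrite !exprS (resM Hs) ?IH //; apply: integralX.
Qed.

Lemma F0 : 0 \in F.
Proof. by case: (F_subfield Hs) => F_1 F_B _; rewrite -(subrr 1) F_B. Qed.

Lemma div_integral mu x : mu != 0 -> ord x = ord mu -> integral (x / mu).
Proof.
move=> mu_neq0 ord_x; have [->|x_neq0] := eqVneq x 0; first by rewrite mul0r; left.
by right; rewrite ord_div // ord_x subrr.
Qed.

Lemma res_prod_XsubC (I : Type) (s : seq I) (a : I -> Fb) m :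
  (forall i, integral (a i)) ->
  integral (\prod_(i <- s) ('X - (a i)%:P))`_m /\
  res (\prod_(i <- s) ('X - (a i)%:P))`_m = (\prod_(i <- s) ('X - (res (a i))%:P))`_m.
Proof.
move=> a_int; elim: s m => [|i s IH] m.
  rewrite !big_nil !coef1; case: (m == 0)%N; rewrite ?(res1 Hs) ?res0.
    by split; first exact: integral1.
  by split; first left.
rewrite !big_cons !mulrBl !coefB !coefXM !coefCM.
have [Um_int Um_res] := IH m; have aUm_int := integralM (a_int i) Um_int.
case: m Um_int Um_res aUm_int => [|m] Um_int Um_res aUm_int /=.
  by rewrite !sub0r resN // (resM Hs) // Um_res; split; first exact: integralN.
have [Um1_int Um1_res] := IH m.
have NaUm_int := integralN aUm_int.
rewrite (resD Hs) // resN // (resM Hs) // Um_res Um1_res.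
by split; first exact: integralD.
Qed.

Lemma ac_ord0 x : x != 0 -> ord x = 0 -> ac ord varpi res x = res x.
Proof. by move=> x_neq0 ord_x; rewrite /ac (negbTE x_neq0) ord_x /= expr0z divr1. Qed.

Lemma res_div_neq mu x y : mu != 0 -> x != y ->
  ord x = ord mu -> ord y = ord mu -> ord (x - y) = ord mu ->
  res (x / mu) != res (y / mu).
Proof.
move=> mu_neq0 x_neq_y ord_x ord_y ord_xy.
have xy_neq0 : x - y != 0 by rewrite subr_eq0.
have diff_int := div_integral mu_neq0 ord_xy.
have x_int := div_integral mu_neq0 ord_x; have y_int := div_integral mu_neq0 ord_y.
rewrite -subr_eq0 -(resN y_int) -(resD Hs) //; last exact: integralN.
rewrite -mulrBl.
apply/negP => /eqP /(res_eq0 Hs diff_int) [/eqP|].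
  by rewrite mulf_eq0 invr_eq0 (negbTE xy_neq0) (negbTE mu_neq0).
by rewrite ord_div // ord_xy subrr ltxx.
Qed.

Section UniformizerRoot.
Variables (n ell : nat) (mu : Fb).
Hypotheses (n_gt0 : (0 < n)%N) (mu_n : mu ^+ n = varpi ^+ ell).

Lemma uroot_neq0 : mu != 0.
Proof. by have := expf_neq0 ell (varpi_neq0 Hs); rewrite -mu_n expf_eq0 n_gt0. Qed.

Lemma ord_uroot : ord mu = ell%:R / n%:R.
Proof.
have := congr1 ord mu_n.
rewrite !ordX ?uroot_neq0 ?(varpi_neq0 Hs) // (ord_varpi Hs).
by rewrite mulr1 => <-; rewrite mulrC mulKf // pnatr_eq0 -lt0n.
Qed.

Lemma t_r_uroot lam : lam != 0 -> ord lam = ord mu ->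
  t_r ord varpi res n ell lam = res (lam / mu) ^+ n.
Proof.
move=> lam_neq0 ord_lam; have mu_neq0 := uroot_neq0.
have ord_u : ord (lam / mu) = 0 by rewrite ord_div // ord_lam subrr.
rewrite /t_r -exprnP -mu_n -expr_div_n ac_ord0 ?expf_neq0 ?mulf_neq0 ?invr_eq0 //.
  by rewrite resX //; right; rewrite ord_u.
by rewrite ordX ?mulf_neq0 ?invr_eq0 // ord_u mulr0.
Qed.

Hypothesis cop_n_ell : coprime n ell.

Lemma res_div_urootX x k : x \in F -> integral (x / mu ^+ k) ->
  res (x / mu ^+ k) =
  if (n %| k)%N then res_i ord varpi res (ell * (k %/ n))%N x else 0.
Proof.
move=> xF quot_int; have [->|x_neq0] := eqVneq x 0.
  by rewrite mul0r res0 /res_i eqxx; case: ifP.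
have [z ord_x] := ord_F_int Hs xF x_neq0.
have muk_neq0 : mu ^+ k != 0 by rewrite expf_neq0 ?uroot_neq0.
have ord_quot : ord (x / mu ^+ k) = z%:~R - (k * ell)%:R / n%:R.
  by rewrite ord_div // ordX ?uroot_neq0 // ord_uroot ord_x natrM mulrA.
have [ord_quot0|ord_quot_neq0] := eqVneq (ord (x / mu ^+ k)) 0.
  have /eqP := ord_quot0; rewrite ord_quot subr_eq0 => /eqP ord_x_frac.
  have [n_k z_E] := int_eq_frac_coprime n_gt0 cop_n_ell ord_x_frac.
  have -> : mu ^+ k = varpi ^+ (ell * (k %/ n)).
    by rewrite exprM -mu_n -exprM mulnC divnK.
  rewrite n_k /res_i x_neq0 ord_x z_E eqxx /= /ac (negbTE x_neq0).
  by rewrite ord_x z_E denq_int numq_int eqxx -exprnP.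
have ord_quot_gt0 : 0 < ord (x / mu ^+ k).
  rewrite lt_def ord_quot_neq0; case: quot_int => [/eqP|//].
  by rewrite mulf_eq0 invr_eq0 (negbTE x_neq0) (negbTE muk_neq0).
rewrite (proj2 (res_eq0 Hs quot_int)); last by right.
case: ifP => // n_k; rewrite /res_i x_neq0 ord_x /=; case: eqP => // z_E.
have frac_E : (k * ell)%:R / n%:R = (ell * (k %/ n))%:R :> rat.
  by rewrite -{1}(divnK n_k) mulnAC natrM mulfK ?pnatr_eq0 -?lt0n // mulnC.
by move: ord_quot_neq0; rewrite ord_quot z_E frac_E pmulrn subrr eqxx.
Qed.

Lemma r_reduction_comp_Xn (I : finType) (g : nat) (lam : I -> Fb) :
    #|I| = (n * g)%N -> \prod_i ('X - (lam i)%:P) \is a polyOver F ->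
    (forall i, ord (lam i) = ord mu) ->
  \prod_i ('X - (res (lam i / mu))%:P) =
  r_reduction ord varpi res #|I| n g ell (\prod_i ('X - (lam i)%:P)) \Po 'X^n.
Proof.
move=> card_I P_F ord_lam; rewrite card_I; set P := \prod_i ('X - (lam i)%:P).
have mu_neq0 := uroot_neq0; pose u i := lam i / mu.
have u_int i : integral (u i) := div_integral mu_neq0 (ord_lam i).
set U := \prod_i ('X - (u i)%:P).
have P_E : P = mu ^+ (n * g) *: (U \Po (mu^-1 *: 'X)).
  by rewrite -card_I -prod_XsubC_scale //; apply: eq_bigr => i _; rewrite mulrC divfK.
apply/polyP => m; rewrite coef_comp_poly_Xn // coef_poly.
have [Um_int <-] := res_prod_XsubC (index_enum I) m u_int.
have [m_gt|m_le] := ltnP (n * g) m.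
  rewrite nth_default ?res0; last first.
    by rewrite size_prod_XsubC /index_enum unlock -enumT -cardT card_I.
  case: ifP => // n_m; case: ifP => // m_le; exfalso; move: m_gt.
  by rewrite ltnNge -(divnK n_m) mulnC leq_mul2l -ltnS m_le orbT.
have Um_E : U`_m = P`_m / mu ^+ (n * g - m)%N.
  rewrite P_E coefZ coef_comp_poly_scaleX exprVn -{1}(subnK m_le) exprD.
  by field; rewrite !expf_neq0.
rewrite Um_E res_div_urootX ?coef_polyOver ?F0 -?Um_E // dvdn_subr ?dvdn_mulr //.
case: dvdnP => [[j m_E]|//]; subst m.
move: m_le; rewrite [(n * g)%N]mulnC leq_pmul2r // => j_le.
rewrite -mulnBl !mulnK // ltnS j_le [(n * _)%N]mulnC -mulnBl subKn // PoszM.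
Qed.

End UniformizerRoot.

End Valuation.

Unset Implicit Arguments. Set Strict Implicit.

Theorem lemma3p4 (p q : nat) (Fb kb : closedFieldType) (F : {pred Fb})
  (ord : Fb -> rat) (varpi : Fb) (res : Fb -> kb)
  (Hset : padic_setting F ord varpi res p q)
  (r : rat) (N : nat) (L : int)
  (Hr : 0 <= r) (HN : (1 <= N)%N) (HrLN : r = L%:~R / N%:R)
  (Hp : (N %/ gcdLN L N < p)%N)
  (lam : 'I_N -> Fb) (Hinj : injective lam)
  (HPF : \prod_(i < N) ('X - (lam i)%:P) \is a polyOver F)
  (Hroot_nz : forall i, lam i != 0)
  (Hslope : forall i, ord (lam i) = r)
  (Hdist : forall i j, i != j -> ord (lam i - lam j) = r) :
  let g := gcdLN L N in
  let l := (L %/ g%:Z)%Z in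
  let n := (N %/ g)%N in
  let P := \prod_(i < N) ('X - (lam i)%:P) in
  let R := r_reduction ord varpi res N n g l P in
  (forall i, root R (t_r ord varpi res n l (lam i))) /\
  (forall y, root R y -> #|[set i : 'I_N | t_r ord varpi res n l (lam i) == y]| = n).
Proof.
move=> g l n P R.
have [ell [l_E N_E cop_n_ell r_E]] : exists ell : nat,
    [/\ l = ell, N = (n * g)%N, coprime n ell & r = ell%:R / n%:R].
  exact: slope_lowest_terms.
have n_gt0 : (0 < n)%N by move: HN; rewrite N_E muln_gt0 => /andP[].
have [mu mu_n] := closed_field_nth_root (varpi ^+ ell) n_gt0.
have mu_neq0 := uroot_neq0 Hset n_gt0 mu_n.
have ord_lam i : ord (lam i) = ord mu.
  by rewrite Hslope r_E (ord_uroot Hset n_gt0 mu_n).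
have t_r_E i : t_r ord varpi res n l (lam i) = res (lam i / mu) ^+ n.
  by rewrite l_E (t_r_uroot Hset n_gt0 mu_n).
have res_inj : injective (fun i => res (lam i / mu)).
  move=> i j; apply: contra_eq => i_neq_j.
  have lam_neq : lam i != lam j by rewrite (inj_eq Hinj).
  rewrite (res_div_neq Hset mu_neq0 lam_neq) ?ord_lam //.
  by rewrite Hdist // -(Hslope i) ord_lam.
have prod_E : \prod_i ('X - (res (lam i / mu))%:P) = R \Po 'X^n.
  rewrite /R l_E -[X in r_reduction _ _ _ X]card_ord.
  by apply: (r_reduction_comp_Xn Hset) => //; rewrite card_ord.
split=> [i|y Ry]; first by rewrite t_r_E (root_comp_Xn_expn prod_E).
have -> : [set i | t_r ord varpi res n l (lam i) == y] =
          [set i | res (lam i / mu) ^+ n == y].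
  by apply/setP => i; rewrite !inE t_r_E.
by apply/eqP; rewrite eqn_leq card_expn_fibre_le //= (card_expn_fibre_ge prod_E).
Qed.
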